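(* Let $H$ be a finite-dimensional complex Hilbert space and let $\mathcal{Pos}(H)$ be the set of positive operators on $H$ (linear $A\colon H\to H$ with $\langle Ax,x\rangle\geq 0$ for all $x\in H$). Then $\mathcal{Pos}(H)$ is a module over the semiring $\mathbb{R}_{\geq 0}$ of non-negative reals, and the map $$\mathrm{hs}_{\mathcal{Pos}}\colon\mathcal{Pos}(H)\longrightarrow\mathcal{Pos}(H)^{*}=\big(\mathcal{Pos}(H)\multimap\mathbb{R}_{\geq0}\big),\qquad \mathrm{hs}_{\mathcal{Pos}}(A)(B)=\mathrm{tr}(AB),$$ is a well-defined isomorphism in $\mathbf{Mod}_{\mathbb{R}_{\geq0}}$, natural in $H$ in the sense that for every linear map $C\colon H\to K$ between finite-dimensional Hilbert spaces, $\mathcal{Pos}(C)^{*}\circ\mathrm{hs}_{\mathcal{Pos},K}=\mathrm{hs}_{\mathcal{Pos},H}\circ\mathcal{Pos}(C^\dagger)$, where $\mathcal{Pos}(C)^*(f)=f\circ\mathcal{Pos}(C)$. Moreover, the functors $\mathcal{Pos}\colon\mathbf{FdHilb}\to\mathbf{Mod}_{\mathbb{R}_{\geq0}}$ and $\mathcal{Pos}\colon\mathbf{FdHilb}^{\mathrm{op}}\to\mathbf{Mod}_{\mathbb{R}_{\geq0}}^{\mathrm{op}}$ together with these isomorphisms form a map of adjunctions (in the sense of Mac Lane, IV.7, with functor squares commuting up to the isomorphisms $\mathrm{hs}_{\mathcal{Pos}}$) from the adjunction $(-)^{\dagger}\dashv(-)^{\dagger}$ between $\mathbf{FdHilb}$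 and $\mathbf{FdHilb}^{\mathrm{op}}$ to the adjunction $((-)\multimap\mathbb{R}_{\geq0})\dashv((-)\multimap\mathbb{R}_{\geq0})$ between $\mathbf{Mod}_{\mathbb{R}_{\geq0}}$ and $\mathbf{Mod}_{\mathbb{R}_{\geq0}}^{\mathrm{op}}$.
   Context: A module over a commutative semiring $S$ is a commutative monoid with a scalar multiplication $S\times M\to M$ that is additive in each argument, satisfies $1\bullet x=x$ and $(st)\bullet x=s\bullet(t\bullet x)$; $\mathbf{Mod}_S$ is the category of $S$-modules and $S$-linear maps, and $M\multimap N$ is the $S$-module of linear maps $M\to N$. The functor $(-)\multimap\mathbb{R}_{\geq0}\colon\mathbf{Mod}_{\mathbb{R}_{\geq0}}\to\mathbf{Mod}_{\mathbb{R}_{\geq0}}^{\mathrm{op}}$ (precomposition on maps) is adjoint to itself via swapping arguments. $\mathbf{FdHilb}$ is the category of finite-dimensional complex Hilbert spaces and linear maps; $C^\dagger$ is the adjoint of $C$; $(-)^\dagger\colon\mathbf{FdHilb}\to\mathbf{FdHilb}^{\mathrm{op}}$ is identity on objects, $C\mapsto C^\dagger$ on maps, and is self-adjoint. The functor $\mathcal{Pos}$ sends $C\colon H\to K$ to $\mathcal{Pos}(C)(A)=CAC^{\dagger}$. $\mathrm{tr}$ is the trace. *)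

From HB Require Import structures.
From mathcomp Require Import all_boot all_order all_algebra.
From mathcomp Require Import reals.
From mathcomp.real_closed Require Import complex.
Set Implicit Arguments. Unset Strict Implicit. Unset Printing Implicit Defensive.
Import Order.TTheory GRing.Theory Num.Theory.
Local Open Scope ring_scope.

(* Objects of FdHilb are modelled (up to unitary isomorphism) as C^n, n : nat,
   with the standard inner product <x,y> = y^* x; linear maps H -> K are
   matrices 'M[C]_(m, n) acting on column vectors (dim H = n, dim K = m). *)
Section Defs.
Variable R : realType.
Local Notation C := R[i].

Definition adj m n (A : 'M[C]_(m, n)) : 'M[C]_(n, m) := map_mx Num.conj A^T.

(* positive operator: <A x, x> >= 0 for all x (in the order of C,
   0 <= z means z is a non-negative real) *)
Definition posop n (A : 'M[C]_n) : Prop :=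
  forall x : 'cV[C]_n, 0 <= ((adj x) *m A *m x) 0 0.

Definition PosMap m n (Cm : 'M[C]_(m, n)) (A : 'M[C]_n) : 'M[C]_m :=
  Cm *m A *m adj Cm.

Definition hs n (A B : 'M[C]_n) : C := \tr (A *m B).

(* The semiring R_{>=0} is realised as the non-negative elements of C
   (0 <= r in C iff r is a non-negative real), acting by scaling. *)
Definition pos_dual_map n (f : 'M[C]_n -> C) : Prop :=
  [/\ forall B, posop B -> 0 <= f B,
      forall B1 B2, posop B1 -> posop B2 -> f (B1 + B2) = f B1 + f B2
    & forall (r : C) B, 0 <= r -> posop B -> f (r *: B) = r * f B].
End Defs.

From HB Require Import structures.
From mathcomp Require Import all_boot all_order all_algebra.
From mathcomp Require Import reals.
From mathcomp.real_closed Require Import complex.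
From mathcomp Require Import ring.
Import Order.TTheory GRing.Theory Num.Theory.
Local Open Scope ring_scope.
Set Implicit Arguments. Unset Strict Implicit. Unset Printing Implicit Defensive.

(* Every positive matrix is a sum of rank-one matrices x x^+: pivoting on a
   non-zero diagonal entry b = A k k, the Schur complement
   A - b^-1 (A e_k) (A e_k)^+ is again positive and has fewer non-zero diagonal
   entries.  Since tr (A (x x^+)) = x^+ A x, this gives tr (A B) >= 0, and
   tr (A1 B) = tr (A2 B) for all positive B forces x^+ (A1 - A2) x = 0 for all
   x, hence A1 = A2 by polarisation.
   Conversely, a linear functional f on Pos is represented by the matrix obtained
   by polarisation from the values of f on e_a e_a^+, (e_a + e_b)(e_a + e_b)^+ and
   (e_a + i e_b)(e_a + i e_b)^+.  Every Hermitian matrix is a real combination of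
   these, hence a difference of two positive matrices on which f and tr (A -)
   agree, and additivity of f then makes them agree on all of Pos.  Naturality
   and the map-of-adjunctions condition are cyclicity of the trace. *)

Section PositiveMatrices.
Variable R : realType.
Local Notation C := R[i].

Lemma adjD m n (A B : 'M[C]_(m, n)) : adj (A + B) = adj A + adj B.
Proof. by apply/matrixP=> i j; rewrite !mxE rmorphD. Qed.

Lemma adjZ m n c (A : 'M[C]_(m, n)) : adj (c *: A) = c^* *: adj A.
Proof. by apply/matrixP=> i j; rewrite !mxE rmorphM. Qed.

Lemma adjM m n p (A : 'M[C]_(m, n)) (B : 'M[C]_(n, p)) :
  adj (A *m B) = adj B *m adj A.
Proof. by rewrite /adj trmx_mul map_mxM. Qed.

Lemma adjE m n (A : 'M[C]_(m, n)) i j : adj A i j = (A j i)^*.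
Proof. by rewrite !mxE. Qed.

Lemma adjK m n (A : 'M[C]_(m, n)) : adj (adj A) = A.
Proof. by apply/matrixP=> i j; rewrite !mxE conjCK. Qed.

Definition sform n (A : 'M[C]_n) (x y : 'cV[C]_n) : C := (adj x *m A *m y) 0 0.

Definition dyad n (x : 'cV[C]_n) : 'M[C]_n := x *m adj x.

Definition evec n (a : 'I_n) : 'cV[C]_n := delta_mx a 0.

Section SesquilinearForm.
Variable n : nat.
Implicit Types (A B : 'M[C]_n) (x y u : 'cV[C]_n).

Lemma sformDl A x1 x2 y : sform A (x1 + x2) y = sform A x1 y + sform A x2 y.
Proof. by rewrite /sform adjD !mulmxDl mxE. Qed.

Lemma sformDr A x y1 y2 : sform A x (y1 + y2) = sform A x y1 + sform A x y2.
Proof. by rewrite /sform !mulmxDr mxE. Qed.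

Lemma sformZl A c x y : sform A (c *: x) y = c^* * sform A x y.
Proof. by rewrite /sform adjZ -!scalemxAl mxE. Qed.

Lemma sformZr A c x y : sform A x (c *: y) = c * sform A x y.
Proof. by rewrite /sform -!scalemxAr mxE. Qed.

Lemma sform_addmx A B x y : sform (A + B) x y = sform A x y + sform B x y.
Proof. by rewrite /sform mulmxDr mulmxDl mxE. Qed.

Lemma sform_scalemx A c x y : sform (c *: A) x y = c * sform A x y.
Proof. by rewrite /sform -scalemxAr -scalemxAl mxE. Qed.

Lemma sform_submx A B x y : sform (A - B) x y = sform A x y - sform B x y.
Proof. by rewrite sform_addmx -[in LHS]scaleN1r sform_scalemx mulN1r. Qed.

Lemma sform_adj A x y : sform (adj A) x y = (sform A y x)^*.
Proof. by rewrite /sform -adjE !adjM adjK mulmxA. Qed.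

Lemma adj_evec (a : 'I_n) : adj (evec a) = delta_mx 0 a.
Proof. by apply/matrixP=> i j; rewrite !mxE (ord1 i) eqxx /= rmorph_nat andbC. Qed.

Lemma sform_evec A a b : sform A (evec a) (evec b) = A a b.
Proof. by rewrite /sform adj_evec -rowE /evec -colE !mxE. Qed.

Lemma sform_evecD A a b c :
  sform A (evec a + c *: evec b) (evec a + c *: evec b) =
  A a a + c * A a b + c^* * A b a + c^* * c * A b b.
Proof.
by rewrite !(sformDl, sformDr, sformZl, sformZr, sform_evec) mulrA addrA.
Qed.

Lemma sform_dyad u x : sform (dyad u) x x = (adj x *m u) 0 0 * ((adj x *m u) 0 0)^*.
Proof.
rewrite /sform /dyad !mulmxA -[_ *m adj u *m x]mulmxA.
by rewrite -[adj u *m x]adjK adjM adjK [LHS]mxE big_ord1 adjE.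
Qed.

Lemma dyadE u i j : dyad u i j = u i 0 * (u j 0)^*.
Proof. by rewrite !mxE big_ord1 adjE. Qed.

Lemma dyadZ c u : dyad (c *: u) = (c * c^*) *: dyad u.
Proof. by rewrite /dyad adjZ -scalemxAl -scalemxAr scalerA. Qed.

Lemma evec_mul_adj (a b : 'I_n) : evec a *m adj (evec b) = delta_mx a b.
Proof. by rewrite adj_evec mul_delta_mx. Qed.

Lemma dyad_evecD (a b : 'I_n) c :
  dyad (evec a + c *: evec b) = dyad (evec a) + c^* *: delta_mx a b
                                + c *: delta_mx b a + (c * c^*) *: dyad (evec b).
Proof.
rewrite /dyad adjD adjZ mulmxDl !mulmxDr -!scalemxAl -!scalemxAr scalerA.
by rewrite !evec_mul_adj !addrA.
Qed.

End SesquilinearForm.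

Section Positivity.
Variable n : nat.
Implicit Types (A B : 'M[C]_n) (x u : 'cV[C]_n).

Lemma posop0 : posop (0 : 'M[C]_n).
Proof. by move=> x; rewrite mulmx0 mul0mx mxE. Qed.

Lemma posopD A B : posop A -> posop B -> posop (A + B).
Proof.
by move=> pA pB x; rewrite -/(sform _ x x) sform_addmx; apply: addr_ge0 (pA x) (pB x).
Qed.

Lemma posopZ r A : 0 <= r -> posop A -> posop (r *: A).
Proof.
by move=> r_ge0 pA x; rewrite -/(sform _ x x) sform_scalemx; apply: mulr_ge0 r_ge0 (pA x).
Qed.

Lemma posop_dyad u : posop (dyad u).
Proof. by move=> x; rewrite -/(sform _ x x) sform_dyad mul_conjC_ge0. Qed.

Lemma sform_eq0 A : (forall x, sform A x x = 0) -> A = 0.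
Proof.
move=> A0; apply/matrixP=> a b; rewrite mxE.
have diag0 c : A c c = 0 by rewrite -sform_evec A0.
have := A0 (evec a + 1 *: evec b); have := A0 (evec a + 'i *: evec b).
rewrite !sform_evecD !diag0 rmorph1 conjCi !mulr0 !addr0 !add0r !mul1r => Ei /eqP.
rewrite addrC addr_eq0 => /eqP Aba; move/eqP: Ei.
by rewrite Aba mulNr mulrN opprK -mulr2n mulrn_eq0 mulf_eq0 (negbTE (@neq0Ci C)) => /eqP.
Qed.

Lemma posop_herm A : posop A -> adj A = A.
Proof.
move=> pA; apply/eqP; rewrite -subr_eq0; apply/eqP; apply: sform_eq0 => x.
by rewrite sform_submx sform_adj conj_Creal ?subrr // ger0_real ?pA.
Qed.

Lemma posop_conj A i j : posop A -> (A i j)^* = A j i.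
Proof. by move/posop_herm=> {2}<-; rewrite adjE. Qed.

Lemma posop_diag_ge0 A k : posop A -> 0 <= A k k.
Proof. by move=> pA; rewrite -sform_evec; apply: pA. Qed.

Lemma posop_diag_eq0 A j k : posop A -> A k k = 0 -> A j k = 0.
Proof.
move=> pA Akk0; apply/eqP; apply/negPn/negP => Ajk_neq0.
set c := - (A j j + 1) / A j k.
have real_rhs : - (A j j + 1) \is Num.real.
  by rewrite realN realD ?real1 ?ger0_real ?posop_diag_ge0.
have cA : c * A j k = - (A j j + 1) by rewrite mulfVK.
have cA' : c^* * A k j = - (A j j + 1).
  by rewrite -(posop_conj j k pA) -[RHS](conj_Creal real_rhs) -cA [RHS]rmorphM.
have := pA (evec j + c *: evec k); rewrite -/(sform _ _ _) sform_evecD.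
rewrite Akk0 mulr0 addr0 cA cA' => ge0.
have := addr_ge0 ge0 (posop_diag_ge0 j pA).
by rewrite (_ : _ + _ = - 2); [rewrite oppr_ge0 lern0 | ring].
Qed.

Definition pivot A k : 'M[C]_n := A - (A k k)^-1 *: dyad (col k A).

Lemma pivotE A k i j : pivot A k i j = A i j - (A k k)^-1 * (A i k * (A j k)^*).
Proof. by rewrite /pivot 3!mxE dyadE !mxE. Qed.

Lemma posop_pivot A k : posop A -> A k k != 0 -> posop (pivot A k).
Proof.
move=> pA Akk_neq0 x; rewrite -/(sform _ x x).
set b := A k k; set w := sform A x (evec k).
have b_conj : b^* = b by rewrite conj_Creal ?ger0_real ?posop_diag_ge0.
have w_conj : sform A (evec k) x = w^* by rewrite -sform_adj posop_herm.
have col_w : (adj x *m col k A) 0 0 = w by rewrite colE mulmxA.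
pose y := x + (- (w^* / b)) *: evec k.
have -> : sform (pivot A k) x x = sform A y y.
  rewrite sform_submx sform_scalemx sform_dyad col_w.
  rewrite !(sformDl, sformDr, sformZl, sformZr) sform_evec w_conj -/w -/b.
  rewrite rmorphN rmorphM fmorphV /= conjCK b_conj.
  by field.
exact: pA.
Qed.

Lemma pivot_diag_support A k : posop A -> A k k != 0 ->
  [set j | pivot A k j j != 0] \subset [set j | A j j != 0] :\ k.
Proof.
move=> pA Akk_neq0; apply/subsetP => j; rewrite !inE pivotE.
have [->|j_neq_k] := eqVneq j k.
  by rewrite conj_Creal ?ger0_real ?posop_diag_ge0 // mulKf // subrr eqxx.
apply: contraNN => /eqP Ajj0.
have Ajk0 : A j k = 0 by rewrite -(posop_conj k j pA) (posop_diag_eq0 k pA Ajj0) rmorph0.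
by rewrite Ajj0 Ajk0 mul0r mulr0 subrr.
Qed.

Lemma posop_sum_dyad A : posop A -> exists vs : seq 'cV[C]_n, A = \sum_(v <- vs) dyad v.
Proof.
have [m] := ubnP #|[set j | A j j != 0]|.
elim: m A => // m IH A supp_lt pA.
have [supp0|[k]] := set_0Vmem [set j | A j j != 0].
  exists [::]; rewrite big_nil; apply/matrixP => i j; rewrite mxE.
  have: j \notin [set j | A j j != 0] by rewrite supp0 inE.
  by rewrite inE negbK => /eqP /(posop_diag_eq0 i pA).
rewrite inE => Akk_neq0.
have [|vs pivot_sum] := IH (pivot A k) _ (posop_pivot pA Akk_neq0).
  rewrite (cardsD1 k) inE Akk_neq0 add1n ltnS in supp_lt.
  exact: leq_ltn_trans (subset_leq_card (pivot_diag_support pA Akk_neq0)) supp_lt.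
have sqrt_inv : (sqrtC (A k k))^-1 * ((sqrtC (A k k))^-1)^* = (A k k)^-1.
  rewrite conj_Creal ?realV ?ger0_real ?sqrtC_ge0 ?posop_diag_ge0 //.
  by rewrite -invfM -expr2 sqrtCK.
exists (((sqrtC (A k k))^-1 *: col k A) :: vs).
by rewrite big_cons -pivot_sum dyadZ sqrt_inv /pivot addrC subrK.
Qed.

End Positivity.

Section HilbertSchmidt.
Variable n : nat.
Implicit Types (A B : 'M[C]_n) (x : 'cV[C]_n).

Lemma hsC A B : hs A B = hs B A.
Proof. exact: mxtrace_mulC. Qed.

Lemma hsDl A1 A2 B : hs (A1 + A2) B = hs A1 B + hs A2 B.
Proof. by rewrite /hs mulmxDl mxtraceD. Qed.

Lemma hsDr A B1 B2 : hs A (B1 + B2) = hs A B1 + hs A B2.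
Proof. by rewrite /hs mulmxDr mxtraceD. Qed.

Lemma hsBr A B1 B2 : hs A (B1 - B2) = hs A B1 - hs A B2.
Proof. by rewrite /hs mulmxBr raddfB. Qed.

Lemma hsZl r A B : hs (r *: A) B = r * hs A B.
Proof. by rewrite /hs -scalemxAl mxtraceZ. Qed.

Lemma hsZr r A B : hs A (r *: B) = r * hs A B.
Proof. by rewrite /hs -scalemxAr mxtraceZ. Qed.

Lemma hs_dyad A x : hs A (dyad x) = sform A x x.
Proof. by rewrite /hs /dyad mulmxA mxtrace_mulC mulmxA /mxtrace big_ord1. Qed.

Lemma hs_ge0 A B : posop A -> posop B -> 0 <= hs A B.
Proof.
move=> pA /posop_sum_dyad[vs ->]; rewrite /hs mulmx_sumr raddf_sum.
apply: sumr_ge0 => v _; change (0 <= hs A (dyad v)).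
by rewrite hs_dyad; apply: pA.
Qed.

Lemma hs_dual A : posop A -> pos_dual_map (hs A).
Proof.
by move=> pA; split=> [B|B1 B2 _ _|r B _ _]; [apply: hs_ge0 | apply: hsDr | apply: hsZr].
Qed.

Lemma hs_inj A1 A2 : (forall B, posop B -> hs A1 B = hs A2 B) -> A1 = A2.
Proof.
move=> eqA; apply/eqP; rewrite -subr_eq0; apply/eqP; apply: sform_eq0 => x.
by rewrite sform_submx -!hs_dyad (eqA _ (posop_dyad x)) subrr.
Qed.

End HilbertSchmidt.

Section PosFunctor.
Variables m n : nat.
Implicit Types (Cm : 'M[C]_(m, n)) (A B : 'M[C]_n).

Lemma sform_PosMap Cm A x :
  sform (PosMap Cm A) x x = sform A (adj Cm *m x) (adj Cm *m x).
Proof. by rewrite /sform /PosMap adjM adjK !mulmxA. Qed.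

Lemma posop_PosMap Cm A : posop A -> posop (PosMap Cm A).
Proof. by move=> pA x; rewrite -/(sform _ x x) sform_PosMap; apply: pA. Qed.

Lemma PosMapD Cm A B : PosMap Cm (A + B) = PosMap Cm A + PosMap Cm B.
Proof. by rewrite /PosMap mulmxDr mulmxDl. Qed.

Lemma PosMapZ Cm r A : PosMap Cm (r *: A) = r *: PosMap Cm A.
Proof. by rewrite /PosMap -scalemxAr -scalemxAl. Qed.

Lemma hs_PosMap Cm (A : 'M[C]_m) B : hs A (PosMap Cm B) = hs (PosMap (adj Cm) A) B.
Proof. by rewrite /hs /PosMap adjK mulmxA mxtrace_mulC !mulmxA. Qed.

End PosFunctor.

Section PolarMatrix.
Variables (n : nat) (al : 'I_n -> C) (be ga : 'I_n -> 'I_n -> C).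

(* The matrix M whose quadratic form x^+ M x takes the values al a, be a b and
   ga a b at e_a, e_a + e_b and e_a + i e_b (for a != b). *)
Definition polar_mx : 'M[C]_n := \matrix_(a, b)
  if a == b then al a
  else (be a b - al a - al b - 'i * (ga a b - al a - al b)) / 2.

Lemma polar_mx_diag a : polar_mx a a = al a.
Proof. by rewrite mxE eqxx. Qed.

Hypothesis beC : forall a b, be b a = be a b.
Hypothesis ga_swap : forall a b, ga b a = 2 * (al a + al b) - ga a b.

Lemma sform_polar_mx1 a b : a != b ->
  sform polar_mx (evec a + 1 *: evec b) (evec a + 1 *: evec b) = be a b.
Proof.
move=> nab; rewrite sform_evecD !mxE !eqxx (negbTE nab) eq_sym (negbTE nab).
by rewrite rmorph1 beC ga_swap; field.
Qed.

Lemma sform_polar_mxi a b : a != b ->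
  sform polar_mx (evec a + 'i *: evec b) (evec a + 'i *: evec b) = ga a b.
Proof.
move=> nab; rewrite sform_evecD !mxE !eqxx (negbTE nab) eq_sym (negbTE nab).
have ii : 'i * 'i = -1 :> C by rewrite -expr2 sqrCi.
by rewrite conjCi beC ga_swap; field: ii.
Qed.

End PolarMatrix.

Section RieszRepresentation.
Variables (n : nat) (f : 'M[C]_n -> C).
Hypothesis f_dual : pos_dual_map f.
Implicit Types (B X : 'M[C]_n).

Local Notation E a := (dyad (evec a)).
Local Notation D c a b := (dyad (evec a + c *: evec b)).

Lemma dual_ge0 B : posop B -> 0 <= f B.
Proof. by case: f_dual => f_ge0 _ _; apply: f_ge0. Qed.

Lemma dualD B1 B2 : posop B1 -> posop B2 -> f (B1 + B2) = f B1 + f B2.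
Proof. by case: f_dual => _ fD _; apply: fD. Qed.

Lemma dualZ r B : 0 <= r -> posop B -> f (r *: B) = r * f B.
Proof. by case: f_dual => _ _ fZ; apply: fZ. Qed.

Lemma dual0 : f 0 = 0.
Proof. by have := dualZ (lexx 0) (@posop0 n); rewrite scale0r mul0r. Qed.

Section Agreement.
Variable A : 'M[C]_n.

Definition agrees X := posop X /\ f X = hs A X.

Definition diff_agrees X := exists P N, [/\ agrees P, agrees N & X = P - N].

Lemma agrees0 : agrees 0.
Proof. by split; [apply: posop0 | rewrite dual0 /hs mulmx0 mxtrace0]. Qed.

Lemma agreesZ r X : 0 <= r -> agrees X -> agrees (r *: X).
Proof. by move=> r_ge0 [pX fX]; split; [apply: posopZ | rewrite dualZ // fX hsZr]. Qed.

Lemma agrees_dyad_diag c a : agrees (E a) -> agrees (D c a a).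
Proof.
rewrite -{2}[evec a]scale1r -scalerDl dyadZ; apply: agreesZ.
exact: mul_conjC_ge0.
Qed.

Lemma agrees_diff X : agrees X -> diff_agrees X.
Proof.
by move=> aX; exists X, 0; rewrite subr0; split=> //; exact: agrees0.
Qed.

Lemma diff_agreesD X Y : diff_agrees X -> diff_agrees Y -> diff_agrees (X + Y).
Proof.
move=> [P1 [N1 [[pP1 fP1] [pN1 fN1] ->]]] [P2 [N2 [[pP2 fP2] [pN2 fN2] ->]]].
exists (P1 + P2), (N1 + N2); split; last by rewrite opprD addrACA.
  by split; [apply: posopD | rewrite dualD // hsDr fP1 fP2].
by split; [apply: posopD | rewrite dualD // hsDr fN1 fN2].
Qed.

Lemma diff_agreesN X : diff_agrees X -> diff_agrees (- X).
Proof. by move=> [P [N [aP aN ->]]]; exists N, P; rewrite opprB. Qed.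

Lemma diff_agreesB X Y : diff_agrees X -> diff_agrees Y -> diff_agrees (X - Y).
Proof. by move=> dX /diff_agreesN; apply: diff_agreesD. Qed.

Lemma diff_agreesZ r X : r \is Num.real -> diff_agrees X -> diff_agrees (r *: X).
Proof.
move=> r_real [P [N [aP aN ->]]]; rewrite scalerBr.
have [r_ge0|r_lt0] := real_ge0P r_real.
  by exists (r *: P), (r *: N); split; try apply: agreesZ.
have nr_ge0 : 0 <= - r by rewrite oppr_ge0 ltW.
exists ((- r) *: N), ((- r) *: P); split; try exact: agreesZ.
by rewrite !scaleNr opprK addrC.
Qed.

Lemma diff_agrees_sum (I : finType) (G : I -> 'M[C]_n) :
  (forall i, diff_agrees (G i)) -> diff_agrees (\sum_i G i).
Proof.
move=> dG; apply: (big_ind diff_agrees) => //; last exact: diff_agreesD.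
exact: agrees_diff agrees0.
Qed.

Lemma diff_agrees_pos X : diff_agrees X -> posop X -> f X = hs A X.
Proof.
move=> [P [N [[pP fP] [pN fN] eX]]] pX.
have : f P = f X + f N by rewrite -dualD // eX subrK.
by move/eqP; rewrite -subr_eq => /eqP <-; rewrite fP fN eX hsBr.
Qed.

Hypothesis agreesE : forall a, agrees (E a).
Hypothesis agreesD1 : forall a b, agrees (D 1 a b).
Hypothesis agreesDi : forall a b, agrees (D 'i a b).

Lemma delta_pair_diff_agrees a b z :
  diff_agrees (z *: delta_mx a b + z^* *: delta_mx b a).
Proof.
have -> : z *: delta_mx a b + z^* *: delta_mx b a =
          'Re z *: (D 1 a b - E a - E b) + 'Im z *: (E a + E b - D 'i a b).
  rewrite !dyad_evecD rmorph1 conjCi mul1r mulrN -expr2 sqrCi opprK.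
  have z_conj : z^* = 'Re z - 'i * 'Im z.
    by rewrite {1}[z]Crect conjC_rect ?Creal_Re ?Creal_Im.
  rewrite z_conj {1}[z]Crect.
  move: (E a) (E b) (delta_mx a b) (delta_mx b a) => X Y U V.
  by apply/matrixP => p q; rewrite !mxE; ring.
have dE c : diff_agrees (E c) := agrees_diff (agreesE c).
apply: diff_agreesD; apply: diff_agreesZ; rewrite ?Creal_Re ?Creal_Im //.
  apply: diff_agreesB; [apply: diff_agreesB|]; rewrite ?dE //.
  exact: agrees_diff (agreesD1 a b).
apply: diff_agreesB; [apply: diff_agreesD|]; rewrite ?dE //.
exact: agrees_diff (agreesDi a b).
Qed.

Lemma herm_diff_agrees M : adj M = M -> diff_agrees M.
Proof.
move=> M_herm.
have sumM : \sum_a \sum_b (M a b)^* *: delta_mx b a = M.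
  rewrite exchange_big [RHS]matrix_sum_delta; apply: eq_bigr => b _.
  by apply: eq_bigr => a _; rewrite -adjE M_herm.
have -> : M = 2^-1 *: \sum_a \sum_b (M a b *: delta_mx a b + (M a b)^* *: delta_mx b a).
  under eq_bigr do rewrite big_split /=.
  rewrite big_split /= sumM -matrix_sum_delta scalerDr -scalerDl.
  by rewrite (_ : 2^-1 + 2^-1 = 1) ?scale1r //; field.
apply: diff_agreesZ; first by rewrite realV realn.
apply: diff_agrees_sum => a; apply: diff_agrees_sum => b.
exact: delta_pair_diff_agrees.
Qed.

End Agreement.

Local Notation al a := (f (E a)).
Local Notation be a b := (f (D 1 a b)).
Local Notation ga a b := (f (D 'i a b)).

Definition riesz : 'M[C]_n :=
  polar_mx (fun a => al a) (fun a b => be a b) (fun a b => ga a b).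

Lemma dual_dyad_addC a b : be b a = be a b.
Proof. by rewrite !scale1r addrC. Qed.

Lemma dual_dyad_swap a b : ga b a = 2 * (al a + al b) - ga a b.
Proof.
have sumD : D 'i b a + D 'i a b = 2 *: (E a + E b).
  rewrite !dyad_evecD conjCi mulrN -expr2 sqrCi opprK.
  move: (E a) (E b) (delta_mx a b) (delta_mx b a) => X Y U V.
  by apply/matrixP => p q; rewrite !mxE; ring.
have pE (c : 'I_n) : posop (E c) := posop_dyad (evec c).
have := congr1 f sumD.
rewrite (dualZ (ler0n _ 2) (posopD (pE a) (pE b))) (dualD (pE a) (pE b)).
by rewrite (dualD (posop_dyad _) (posop_dyad _)) => <-; rewrite addrK.
Qed.

Lemma agrees_riesz_E a : agrees riesz (E a).
Proof. by split; [exact: posop_dyad | rewrite hs_dyad sform_evec polar_mx_diag]. Qed.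

Lemma agrees_riesz_D1 a b : agrees riesz (D 1 a b).
Proof.
have [<-|nab] := eqVneq a b; first exact/agrees_dyad_diag/agrees_riesz_E.
split; first exact: posop_dyad.
by rewrite hs_dyad (sform_polar_mx1 dual_dyad_addC dual_dyad_swap nab).
Qed.

Lemma agrees_riesz_Di a b : agrees riesz (D 'i a b).
Proof.
have [<-|nab] := eqVneq a b; first exact/agrees_dyad_diag/agrees_riesz_E.
split; first exact: posop_dyad.
by rewrite hs_dyad (sform_polar_mxi dual_dyad_addC dual_dyad_swap nab).
Qed.

Lemma riesz_repr B : posop B -> f B = hs riesz B.
Proof.
move=> pB; apply: diff_agrees_pos (pB).
exact: herm_diff_agrees agrees_riesz_E agrees_riesz_D1 agrees_riesz_Di _ (posop_herm pB).
Qed.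

Lemma posop_riesz : posop riesz.
Proof.
move=> x; rewrite -/(sform _ x x) -hs_dyad -(riesz_repr (posop_dyad x)).
exact/dual_ge0/posop_dyad.
Qed.

End RieszRepresentation.
End PositiveMatrices.

Theorem proposition2p3 (R : realType) :
  (forall n : nat,
     [/\ posop (0 : 'M[R[i]]_n),
         forall A B : 'M[R[i]]_n, posop A -> posop B -> posop (A + B)
       & forall (r : R[i]) (A : 'M[R[i]]_n), 0 <= r -> posop A -> posop (r *: A)])
  /\ (forall (m n : nat) (Cm : 'M[R[i]]_(m, n)),
     [/\ forall A, posop A -> posop (PosMap Cm A),
         forall A B, posop A -> posop B ->
           PosMap Cm (A + B) = PosMap Cm A + PosMap Cm B
       & forall (r : R[i]) A, 0 <= r -> posop A ->
           PosMap Cm (r *: A) = r *: PosMap Cm A])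
  /\ (forall n : nat,
     [/\ forall A : 'M[R[i]]_n, posop A -> pos_dual_map (hs A),
         forall A1 A2 B : 'M[R[i]]_n, posop A1 -> posop A2 -> posop B ->
           hs (A1 + A2) B = hs A1 B + hs A2 B,
         forall (r : R[i]) (A B : 'M[R[i]]_n), 0 <= r -> posop A -> posop B ->
           hs (r *: A) B = r * hs A B,
         forall A1 A2 : 'M[R[i]]_n, posop A1 -> posop A2 ->
           (forall B, posop B -> hs A1 B = hs A2 B) -> A1 = A2
       & forall f : 'M[R[i]]_n -> R[i], pos_dual_map f ->
           exists2 A : 'M[R[i]]_n, posop A & forall B, posop B -> f B = hs A B])
  /\ (forall (m n : nat) (Cm : 'M[R[i]]_(m, n)) (A : 'M[R[i]]_m) (B : 'M[R[i]]_n),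
        posop A -> posop B ->
        hs A (PosMap Cm B) = hs (PosMap (adj Cm) A) B)
  /\ (forall (m n : nat) (Cm : 'M[R[i]]_(m, n)) (A : 'M[R[i]]_n) (B : 'M[R[i]]_m),
        posop A -> posop B ->
        hs (PosMap Cm A) B = hs (PosMap (adj Cm) B) A).
Proof.
split; first by move=> n; split=> [|A B|r A]; [exact: posop0 | exact: posopD | exact: posopZ].
split.
  move=> m n Cm; split=> [A|A B _ _|r A _ _];
    [exact: posop_PosMap | exact: PosMapD | exact: PosMapZ].
split.
  move=> n; split=> [A|A1 A2 B _ _ _|r A B _ _ _|A1 A2 _ _|f f_dual].
  - exact: hs_dual.
  - exact: hsDl.
  - exact: hsZl.
  - exact: hs_inj.
  - by exists (riesz f); [exact: posop_riesz | exact: riesz_repr].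
split=> m n Cm A B _ _; first exact: hs_PosMap.
by rewrite hsC hs_PosMap.
Qed.
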